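(* Let $\mathcal{T}$ be a $(\rho,M)$-tree. For all $t>\dim_{\mathrm{L}}\partial\mathcal{T}$ and $\ell\in\mathbb{N}$, there exist an integer $n\geq\ell$, $Q\in\mathcal{T}_n$, and an integer $k\geq n+\ell$ such that for all $j=0,\ldots,\ell$ and all $Q'\in\mathcal{T}^Q_j$, $$\frac{\#(Q'\cap\mathcal{T}^Q_{k-n})}{\#\mathcal{T}^Q_{k-n}}\geq\rho^{tj}.$$
   Context: Inner regular partition: for a non-empty compact $K\subset\mathbb{R}^d$ and $\rho\in(0,1)$, a family $\{(Q_{i,k},x_{i,k}):k\in\mathbb{N}\cup\{0\},\ i\in\mathcal{N}_k\}$ of non-empty Borel sets $Q_{i,k}$ with points $x_{i,k}\in K\cap Q_{i,k}$ such that, for constants $c,C>0$: (i) $\#\mathcal{N}_0=1$; (ii) for each $k$, $K$ is the disjoint union of the $Q_{i,k}$, $i\in\mathcal{N}_k$; (iii) sets of levels $k\leq m$ are either disjoint or the level-$m$ set is contained in the level-$k$ set; (iv) $B(x_{i,k},c\rho^k)\subset Q_{i,k}\subset B(x_{i,k},C\rho^k)$ (closed balls); (v) $\{x_{i,k}:i\in\mathcal{N}_k\}\subset\{x_{i,k+1}:i\in\mathcal{N}_{k+1}\}$. A $(\rho,M)$-tree is a set $\mathcal{T}$ of finite words over $\mathcal{A}=\{1,\ldots,M\}$ obtained from such a partition in which each set has at most $M$ children: the root set gets the empty word, and if the set labelled $\mathtt{a}$ has children $R_1,\ldots,R_j$ ($j\leq M$), $R_i$ is labelled $\mathtt{a}i$;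 $\mathcal{T}$ is the set of labels and $\mathcal{T}_n$ the labels of length $n$. Elements of $\mathcal{T}$ are identified with cylinders $[\mathtt{a}]=\{x\in\mathcal{A}^{\mathbb{N}}:x\text{ begins with }\mathtt{a}\}$; $\partial\mathcal{T}=\bigcap_n\bigcup_{\mathtt{a}\in\mathcal{T}_n}[\mathtt{a}]$. For $Q=[\mathtt{a}]$ with $\mathtt{a}\in\mathcal{T}$, the subtree is $\mathcal{T}^Q=\{\mathtt{b}:\mathtt{a}\mathtt{b}\in\mathcal{T}\}$ and $\mathcal{T}^Q_j$ its words of length $j$. For $Q'=[\mathtt{b}']$ with $\mathtt{b}'\in\mathcal{T}^Q_j$, $\#(Q'\cap\mathcal{T}^Q_m)$ is the number of $\mathtt{b}\in\mathcal{T}^Q_m$ with $[\mathtt{b}]\subset Q'$. The lower dimension of $\partial\mathcal{T}$ is $\dim_{\mathrm{L}}\partial\mathcal{T}=\sup\{s>0:\exists C>0\ \forall 0\leq m\leq k\ \forall\mathtt{a}\in\mathcal{T}_m,\ \#\{\mathtt{b}\in\mathcal{T}_k:[\mathtt{b}]\subset[\mathtt{a}]\}\geq C\rho^{(m-k)s}\}$. *)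

From HB Require Import structures.
From mathcomp Require Import all_boot all_order all_algebra.
From mathcomp Require Import finmap all_classical all_reals all_analysis.
Set Implicit Arguments. Unset Strict Implicit. Unset Printing Implicit Defensive.
Import Order.TTheory GRing.Theory Num.Theory.
Import numFieldNormedType.Exports.
Local Open Scope classical_set_scope.
Local Open Scope ring_scope.

Section Defs.
Variable R : realType.

Local Notation pt d := ('rV[R]_d).
Definition edist d (x y : pt d) : R := Num.sqrt (\sum_(i < d) (x ord0 i - y ord0 i) ^+ 2).
Definition cball d (x : pt d) (r : R) : set (pt d) := [set y | edist x y <= r].

Definition eopen d (U : set (pt d)) :=
  forall x, U x -> exists2 r : R, 0 < r & [set y | edist x y < r] `<=` U.
Definition borel d (A : set (pt d)) : Prop := <<s [set U | @eopen d U] >> A.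

Definition inner_regular_partition d (K : set (pt d)) (rho : R)
  (N : nat -> Type) (Q : forall k, N k -> set (pt d)) (x : forall k, N k -> pt d)
  (c C : R) : Prop :=
  (exists i0 : N 0, forall i, i = i0) /\
  [/\ (forall k i, Q k i !=set0 /\ borel (Q k i) /\ K (x k i) /\ Q k i (x k i)),
      (forall k, \bigcup_(i in setT) Q k i = K /\
                 forall i j, i <> j -> Q k i `&` Q k j = set0),
      (forall k m (i : N k) (j : N m), (k <= m)%N ->
          Q k i `&` Q m j = set0 \/ Q m j `<=` Q k i),
      (forall k i, K `&` cball (x k i) (c * rho ^+ k) `<=` Q k i /\
                   Q k i `<=` cball (x k i) (C * rho ^+ k)) &
      (forall k (i : N k), exists j : N k.+1, x k.+1 j = x k i)].

(* A (rho,M)-tree: the set of labels (finite words over {1,...,M}) obtained from an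
   inner regular partition of a non-empty compact K in which each set has at most M
   children: the root gets the empty word and if the set labelled a has children
   R_1,...,R_j (j <= M) then R_i gets the label rcons a i. *)
Definition rhoM_tree (rho : R) (M : nat) (T : set (seq nat)) : Prop :=
  (0 < rho < 1) /\
  exists (d : nat) (K : set (pt d)) (N : nat -> Type)
         (Q : forall k, N k -> set (pt d)) (x : forall k, N k -> pt d) (c C : R),
    [/\ K !=set0, compact K, 0 < c, 0 < C &
        inner_regular_partition K rho Q x c C] /\
    exists lab : forall k, N k -> seq nat,
      [/\ (forall i : N 0, lab 0 i = [::]),
          (forall k (i : N k), exists (n : nat) (f : N k.+1 -> nat),
              [/\ (n <= M)%N,
                  (forall j, Q k.+1 j `<=` Q k i ->
                      (1 <= f j <= n)%N /\ lab k.+1 j = rcons (lab k i) (f j)),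
                  (forall j j', Q k.+1 j `<=` Q k i -> Q k.+1 j' `<=` Q k i ->
                      f j = f j' -> j = j') &
                  (forall m, (1 <= m <= n)%N ->
                      exists2 j, Q k.+1 j `<=` Q k i & f j = m)]) &
          T = [set w | exists k (i : N k), lab k i = w]].

Definition cyl (M : nat) (a : seq nat) : set (nat -> nat) :=
  [set y | (forall i, 1 <= y i <= M)%N /\
           (forall i, (i < size a)%N -> y i = nth 0%N a i)].

Definition ncard (A : set (seq nat)) : nat := (#|` fset_set A|)%fset.

Definition level (T : set (seq nat)) (n : nat) : set (seq nat) :=
  [set w | T w /\ size w = n].

(* subtree T^Q for Q = [a] *)
Definition subtree (T : set (seq nat)) (a : seq nat) : set (seq nat) :=
  [set b | T (a ++ b)].

(* #(Q' cap S_m) = number of b in S_m with [b] subset of Q' = [b'] *)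
Definition count_in (M : nat) (S : set (seq nat)) (m : nat) (b' : seq nat) : nat :=
  ncard [set b | level S m b /\ cyl M b `<=` cyl M b'].

Definition dimL (rho : R) (M : nat) (T : set (seq nat)) : R :=
  sup [set s : R | 0 < s /\
        exists2 C0 : R, 0 < C0 &
          forall (m k : nat), (m <= k)%N -> forall a, level T m a ->
            C0 * powR rho ((m%:R - k%:R) * s) <= (count_in M T k a)%:R].

End Defs.

From HB Require Import structures.
From mathcomp Require Import all_boot all_order all_algebra.
From mathcomp Require Import all_classical all_reals all_analysis.
From mathcomp Require Import finmap zify ring.
Set Implicit Arguments.
Unset Strict Implicit.
Unset Printing Implicit Defensive.
Import Order.TTheory GRing.Theory Num.Theory.
Local Open Scope classical_set_scope.
Local Open Scope ring_scope.

(* Write q = rho^t and N_k(a) for the number of words of length k of T extending a.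
   If the corollary failed, every word a of T of length n >= l would have, at every
   level k >= n + l, a thin extension ab in T, with 0 < |b| <= l and
   N_k(ab) < q^|b| N_k(a). Passing to thin extensions until fewer than l levels
   remain gives q^l <= N_k(a) q^(k-n); extending words shorter than l first,
   q^(2l) <= N_k(a) q^(k-n) for all a in T_n and k >= n. This is the lower-dimension
   estimate with exponent t, so t <= dim_L, a contradiction. *)

Section InnerRegularPartition.
Variables (R : realType) (d : nat) (K : set 'rV[R]_d) (rho c C : R) (N : nat -> Type).
Variables (Q : forall k, N k -> set 'rV[R]_d) (x : forall k, N k -> 'rV[R]_d).
Hypothesis HQ : inner_regular_partition K rho Q x c C.

Lemma irp_meet_sub k (i : N k) (j : N k.+1) : Q i `&` Q j !=set0 -> Q j `<=` Q i.
Proof.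
case: HQ => _ [_ _ nested _ _] [y Qy].
by case: (nested k k.+1 i j (leqnSn k)) => // Q0; rewrite Q0 in Qy.
Qed.

Lemma irp_parent k (j : N k.+1) : exists i : N k, Q j `<=` Q i.
Proof.
case: HQ => _ [Qne partition _ _ _]; have [[y Qy] _] := Qne k.+1 j.
have : K y by case: (partition k.+1) => <- _; exists j.
case: (partition k) => <- _ [i _ Qiy].
by exists i; apply: irp_meet_sub; exists y.
Qed.

Lemma irp_child k (i : N k) : exists j : N k.+1, Q j `<=` Q i.
Proof.
case: HQ => _ [Qne _ _ _ centers]; have [j xj] := centers k i.
exists j; apply: irp_meet_sub; exists (x i); split.
- by case: (Qne k i) => _ [_ []].
- by rewrite -xj; case: (Qne k.+1 j) => _ [_ []].
Qed.

End InnerRegularPartition.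

Record word_tree (M : nat) (T : set (seq nat)) : Prop := WordTree {
  word_tree_nil : T [::];
  word_tree_letters : forall w, T w -> all (fun x => 0 < x <= M)%N w;
  word_tree_rcons : forall w, T w -> exists x, T (rcons w x) }.

Lemma rhoM_tree_word_tree (R : realType) (rho : R) M T :
  rhoM_tree rho M T -> word_tree M T.
Proof.
case=> _ [d [K [N [Q [x [c [C [[_ _ _ _ HQ] [lab [lab0 labS ->]]]]]]]]]].
have [[i0 _] _] := HQ.
have lab_letters k (i : N k) : all (fun x => 0 < x <= M)%N (lab k i).
  elim: k i => [|k IH] i; first by rewrite lab0.
  have [i' sub] := irp_parent HQ i; have [n [f [nM labf _ _]]] := labS k i'.
  case: (labf i sub) => /andP[f_gt0 f_le] ->.
  by rewrite all_rcons IH f_gt0 (leq_trans f_le nM).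
split.
- by exists 0%N, i0.
- by move=> _ [k [i <-]].
- move=> _ [k [i <-]]; have [j sub] := irp_child HQ i.
  have [n [f [_ labf _ _]]] := labS k i.
  by exists (f j), k.+1, j; case: (labf j sub).
Qed.

Fixpoint words (M k : nat) : seq (seq nat) :=
  if k is k'.+1 then allpairs cons (iota 1 M) (words M k') else [:: [::]].

Lemma size_words M k : size (words M k) = (M ^ k)%N.
Proof. by elim: k => //= k IH; rewrite size_allpairs size_iota IH expnS. Qed.

Lemma mem_words M w : all (fun x => 0 < x <= M)%N w -> w \in words M (size w).
Proof.
elim: w => //= x w IH /andP[x_in w_in].
by apply: allpairs_f (IH w_in); rewrite mem_iota add1n ltnS.
Qed.

Lemma ncard_le (A B : set (seq nat)) : A `<=` B -> finite_set B -> (ncard A <= ncard B)%N.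
Proof.
move=> AB finB; have finA := sub_finite_set AB finB.
by apply: fsubset_leq_card; rewrite -fset_set_sub.
Qed.

Lemma ncard_seq (s : seq (seq nat)) : (ncard [set` s] <= size s)%N.
Proof.
rewrite /ncard; have -> : [set` s] = [set` [fset x in s]%fset].
  by apply/seteqP; split=> x /=; rewrite in_fset.
by rewrite set_fsetK card_fseq size_undup.
Qed.

Lemma ncard_gt0 (A : set (seq nat)) w : finite_set A -> A w -> (0 < ncard A)%N.
Proof.
move=> finA Aw; rewrite /ncard cardfs_gt0; apply/fset0Pn; exists w.
by rewrite in_fset_set //; apply: mem_set.
Qed.

Lemma ncard_image (f : seq nat -> seq nat) (A : set (seq nat)) :
  injective f -> finite_set A -> ncard (f @` A) = ncard A.
Proof. by move=> f_inj finA; rewrite /ncard fset_set_image // card_imfset. Qed.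

Lemma cyl_subset_prefix M b b' : (0 < M)%N -> all (fun x => 0 < x <= M)%N b ->
  (size b' <= size b)%N -> cyl M b `<=` cyl M b' <-> prefix b' b.
Proof.
move=> M_gt0 b_letters b'b; split=> [sub | /prefixP[s ->] y [y_in yb]].
- have [_ yb'] : cyl M b' (nth 1%N b).
    apply: sub; split=> i; last by move=> ib; apply: set_nth_default.
    case: (ltnP i (size b)) => [ib | /(nth_default 1%N) ->]; last by [].
    exact: (all_nthP 1%N b_letters).
  rewrite prefixE; apply/eqP/(@eq_from_nth _ 0%N) => [|i]; first by rewrite size_takel.
  rewrite size_takel // => ib'; rewrite nth_take // -yb' //.
  by apply: set_nth_default; apply: leq_trans b'b.
- split=> // i ib'; rewrite yb ?nth_cat ?ib' // size_cat.
  exact: leq_trans ib' (leq_addr _ _).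
Qed.

Definition desc (T : set (seq nat)) (k : nat) (w : seq nat) : set (seq nat) :=
  [set c | T c /\ size c = k /\ prefix w c].

Definition ndesc (T : set (seq nat)) (k : nat) (w : seq nat) : nat := ncard (desc T k w).

Section WordTree.
Variables (M : nat) (T : set (seq nat)).
Hypothesis TW : word_tree M T.

Lemma word_tree_M_gt0 : (0 < M)%N.
Proof.
have [x Tx] := word_tree_rcons TW (word_tree_nil TW).
by have /andP[/andP[x_gt0 xM] _] := word_tree_letters TW Tx; apply: leq_trans xM.
Qed.

Lemma word_tree_cat w n : T w -> exists s, size s = n /\ T (w ++ s).
Proof.
move=> Tw; elim: n => [|n [s [<- Tws]]]; first by exists [::]; rewrite cats0.
have [x Twsx] := word_tree_rcons TW Tws.
by exists (rcons s x); rewrite size_rcons -rcons_cat.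
Qed.

Lemma level_sub_words (S : set (seq nat)) k :
  (forall w, S w -> all (fun x => 0 < x <= M)%N w) -> level S k `<=` [set` words M k].
Proof. by move=> S_letters w [Sw <-]; apply: mem_words; apply: S_letters. Qed.

Lemma desc_sub_words k w : desc T k w `<=` [set` words M k].
Proof.
move=> c [Tc [ck _]]; apply: (level_sub_words (word_tree_letters TW)).
by split.
Qed.

Lemma desc_finite k w : finite_set (desc T k w).
Proof. exact: sub_finite_set (@desc_sub_words k w) (finite_seq _). Qed.

Lemma ndesc_le_expn k w : (ndesc T k w <= M ^ k)%N.
Proof.
rewrite -size_words; apply: leq_trans (ncard_seq _).
exact: ncard_le (@desc_sub_words k w) (finite_seq _).
Qed.

Lemma ndesc_prefix k w w' : prefix w w' -> (ndesc T k w' <= ndesc T k w)%N.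
Proof.
move=> ww'; apply: ncard_le (desc_finite k w) => c [Tc [ck w'c]].
by split; [|split; [|apply: prefix_trans w'c]].
Qed.

Lemma ndesc_gt0 k w : T w -> (size w <= k)%N -> (0 < ndesc T k w)%N.
Proof.
move=> Tw wk; have [s [sk Tws]] := word_tree_cat (k - size w) Tw.
apply: (@ncard_gt0 _ (w ++ s) (desc_finite k w)).
by split; [|split; [rewrite size_cat sk subnKC | apply: prefix_prefix]].
Qed.

Lemma count_in_subtree a b k : (size a + size b <= k)%N ->
  count_in M (subtree T a) (k - size a) b = ndesc T k (a ++ b).
Proof.
move=> abk; rewrite /count_in; set A := [set c | _].
have letters c : T (a ++ c) -> all (fun x => 0 < x <= M)%N c.
  by move/(word_tree_letters TW); rewrite all_cat => /andP[].
have finA : finite_set A.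
  apply: sub_finite_set (finite_seq (words M (k - size a))) => c [c_lev _].
  exact: (@level_sub_words (subtree T a) _ letters c c_lev).
have cat_inj : injective (cat a) by move=> c c' /eqP; rewrite eqseq_cat // => /andP[_ /eqP].
rewrite -(ncard_image cat_inj finA) /ndesc; congr ncard.
apply/seteqP; split=> [_ [c [[Tac ck] sub] <-] | c [Tc [ck /prefixP[s Ec]]]].
- split=> //; split; first by rewrite size_cat ck; lia.
  rewrite prefix_catr // eqxx /=.
  by apply/(cyl_subset_prefix word_tree_M_gt0 (letters c Tac)); first by rewrite ck; lia.
- subst c; exists (b ++ s); last by rewrite catA.
  have Tabs : T (a ++ (b ++ s)) by rewrite catA.
  have bsk : size (b ++ s) = (k - size a)%N by rewrite -ck !size_cat; lia.
  split; first by split.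
  apply/(cyl_subset_prefix word_tree_M_gt0 (letters _ Tabs)); last exact: prefix_prefix.
  by rewrite size_cat leq_addr.
Qed.

Lemma ncard_level_subtree a k : (size a <= k)%N ->
  ncard (level (subtree T a) (k - size a)) = ndesc T k a.
Proof.
move=> ak; rewrite -[a in RHS]cats0 -count_in_subtree ?addn0 //; congr ncard.
by apply/seteqP; split=> [c lev | c []]; [split=> // y [] | ].
Qed.

Lemma count_in_ndesc a k : (size a <= k)%N -> count_in M T k a = ndesc T k a.
Proof. by move=> ak; have := @count_in_subtree [::] a k; rewrite subn0; apply. Qed.

End WordTree.

Lemma expr_lt_eps (R : realType) (z eps : R) :
  0 <= z < 1 -> 0 < eps -> exists n, z ^+ n < eps.
Proof.
move=> /andP[z_ge0 z_lt1] eps_gt0.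
have z_norm : `|z| < 1 by rewrite ger0_norm.
have [n _ small] := cvgr0_norm_lt _ (cvg_expr z_norm) _ eps_gt0.
by exists n; have := small n (leqnn n); rewrite ger0_norm ?exprn_ge0.
Qed.

Lemma powR_natB (R : realType) (x s : R) (m k : nat) : 0 <= x -> (m <= k)%N ->
  x `^ ((m%:R - k%:R) * s) = ((x `^ s) ^+ (k - m))^-1.
Proof.
move=> x_ge0 mk; rewrite -powR_mulrn ?powR_ge0 // -powRrM -powRN.
by congr (_ `^ _); rewrite natrB //; ring.
Qed.

Section LowerDimension.
Variables (R : realType) (rho : R) (M : nat) (T : set (seq nat)).

Definition dimL_set : set R := [set s : R | 0 < s /\
  exists2 C0 : R, 0 < C0 &
    forall (m k : nat), (m <= k)%N -> forall a, level T m a ->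
      C0 * powR rho ((m%:R - k%:R) * s) <= (count_in M T k a)%:R].

Lemma dimLE : dimL rho M T = sup dimL_set.
Proof. by []. Qed.

Lemma dimL_ge0 : 0 <= dimL rho M T.
Proof.
rewrite dimLE; case: (pselect (has_sup dimL_set)) => [sup_set | /sup_out -> //].
have [[s s_in] _] := sup_set.
exact: le_trans (ltW s_in.1) (sup_upper_bound sup_set s_in).
Qed.

Hypotheses (TW : word_tree M T) (rho_gt0 : 0 < rho) (rho_lt1 : rho < 1).

Lemma dimL_setP s : dimL_set s <-> 0 < s /\ exists2 C0, 0 < C0 &
  forall a k, T a -> (size a <= k)%N -> C0 <= (ndesc T k a)%:R * (rho `^ s) ^+ (k - size a).
Proof.
have q_gt0 : 0 < rho `^ s by apply: powR_gt0.
split=> -[s_gt0 [C0 C0_gt0 bound]]; split=> //; exists C0 => //.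
- move=> a k Ta ak; have := bound _ k ak a (conj Ta erefl).
  by rewrite powR_natB ?(ltW rho_gt0) // count_in_ndesc // ler_pdivrMr ?exprn_gt0.
- move=> m k mk a [Ta am]; rewrite -am in mk *.
  rewrite powR_natB ?(ltW rho_gt0) // count_in_ndesc // ler_pdivrMr ?exprn_gt0 //.
  exact: bound.
Qed.

(* Needed because [sup] of a set that is not bounded above is [0]. *)
Lemma dimL_set_bounded : exists B, ubound dimL_set B.
Proof.
have M_gt0 : 0 < M%:R :> R by rewrite ltr0n (word_tree_M_gt0 TW).
have rho01 : 0 < rho <= 1 by rewrite rho_gt0 (ltW rho_lt1).
have [n0 rho_n0] : exists n0, rho ^+ n0 < M%:R^-1.
  by apply: expr_lt_eps; rewrite ?invr_gt0 ?(ltW rho_gt0).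
exists n0%:R => s /dimL_setP[_ [C0 C0_gt0 bound]]; rewrite leNgt; apply/negP => n0_s.
pose z := M%:R * rho `^ s.
have z01 : 0 <= z < 1.
  rewrite mulr_ge0 ?powR_ge0 //= -(mulfV (lt0r_neq0 M_gt0)) ltr_pM2l //.
  apply: le_lt_trans rho_n0.
  rewrite -powR_mulrn ?(ltW rho_gt0) //; exact: (ger_powR rho01 (ltW n0_s)).
have [k zk] := expr_lt_eps z01 C0_gt0.
have := bound [::] k (word_tree_nil TW) (leq0n k); rewrite subn0 => C0_le.
have : (ndesc T k [::])%:R <= M%:R ^+ k :> R by rewrite -natrX ler_nat ndesc_le_expn.
rewrite -(ler_pM2r (exprn_gt0 k (powR_gt0 s rho_gt0))) -exprMn => N_le.
by have := lt_le_trans zk (le_trans C0_le N_le); rewrite ltxx.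
Qed.

Lemma le_dimL s : dimL_set s -> s <= dimL rho M T.
Proof.
move=> s_in; have [B B_ub] := dimL_set_bounded.
by apply: sup_upper_bound => //; split; [exists s | exists B].
Qed.

End LowerDimension.

Section ThinChildren.
Variables (R : realType) (M : nat) (T : set (seq nat)) (q : R) (l : nat).
Hypotheses (TW : word_tree M T) (q_gt0 : 0 < q) (q_le1 : q <= 1).
Hypothesis thin_child : forall a k, T a -> (l <= size a)%N -> (size a + l <= k)%N ->
  exists2 b, (0 < size b <= l)%N &
    T (a ++ b) /\ (ndesc T k (a ++ b))%:R < q ^+ size b * (ndesc T k a)%:R.

Let q_ge0 : 0 <= q. Proof. exact: ltW. Qed.

Let ndesc_ge1 a k : T a -> (size a <= k)%N -> 1 <= (ndesc T k a)%:R :> R.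
Proof. by move=> Ta ak; rewrite ler1n (ndesc_gt0 TW). Qed.

Lemma ndesc_ge_iter d a : T a -> (l <= size a)%N ->
  q ^+ l <= (ndesc T (size a + d) a)%:R * q ^+ d.
Proof.
elim/ltn_ind: d a => d IH a Ta la.
case: (ltnP d l) => [dl | ld].
  apply: le_trans (ler_peMl (exprn_ge0 _ q_ge0) (ndesc_ge1 Ta (leq_addr _ _))).
  exact: ler_wiXn2l (ltnW dl).
have ald : (size a + l <= size a + d)%N by rewrite leq_add2l.
have [b /andP[b_gt0 bl] [Tab thin]] := thin_child Ta la ald.
have bd : (size b <= d)%N by apply: leq_trans bl ld.
have lab : (l <= size (a ++ b))%N by rewrite size_cat; lia.
have db_lt : (d - size b < d)%N by lia.
have := IH _ db_lt _ Tab lab.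
rewrite size_cat -addnA subnKC // => /le_trans; apply.
rewrite -[in q ^+ d](subnKC bd) exprD mulrA ler_pM2r ?exprn_gt0 // mulrC.
exact: ltW.
Qed.

Lemma ndesc_ge a k : T a -> (size a <= k)%N ->
  q ^+ (l + l) <= (ndesc T k a)%:R * q ^+ (k - size a).
Proof.
move=> Ta ak; case: (leqP k l) => [kl | lk].
  apply: le_trans (ler_peMl (exprn_ge0 _ q_ge0) (ndesc_ge1 Ta ak)).
  by apply: ler_wiXn2l => //; lia.
pose m := maxn (size a) l.
have [s [sm Tas]] := word_tree_cat TW (m - size a) Ta.
have as_m : size (a ++ s) = m by rewrite size_cat sm; lia.
have := ndesc_ge_iter (k - m) Tas; rewrite as_m subnKC; last by lia.
move=> /(_ (leq_maxr _ _)) iter.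
have N_prefix : (ndesc T k (a ++ s))%:R <= (ndesc T k a)%:R :> R.
  by rewrite ler_nat (ndesc_prefix TW) // prefix_prefix.
apply: le_trans (_ : q ^+ l * q ^+ (m - size a) <= _).
  by rewrite -exprD; apply: ler_wiXn2l => //; lia.
rewrite (_ : k - size a = k - m + (m - size a))%N; last by lia.
rewrite exprD mulrA ler_pM2r ?exprn_gt0 //.
by apply: le_trans iter _; rewrite ler_pM2r ?exprn_gt0.
Qed.

End ThinChildren.

Lemma count_in_ratio_ge (R : realType) M T (q : R) (l : nat) a k :
  word_tree M T -> T a -> (size a + l <= k)%N ->
  (forall b, (0 < size b <= l)%N -> T (a ++ b) ->
     q ^+ size b * (ndesc T k a)%:R <= (ndesc T k (a ++ b))%:R) ->
  forall j b, (j <= l)%N -> level (subtree T a) j b ->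
  q ^+ j <= (count_in M (subtree T a) (k - size a) b)%:R /
            (ncard (level (subtree T a) (k - size a)))%:R.
Proof.
move=> TW Ta alk not_thin j b jl [Tab bj].
rewrite (count_in_subtree TW) ?(ncard_level_subtree TW); try lia.
rewrite ler_pdivlMr ?ltr0n ?(ndesc_gt0 TW) //; last by lia.
have [b0 | b_gt0] := posnP (size b); last by rewrite -bj not_thin ?b_gt0 //=; lia.
by move: b0 bj => /size0nil -> <-; rewrite cats0 expr0 mul1r.
Qed.

Theorem corollary3p7 (R : realType) (rho : R) (M : nat) (T : set (seq nat)) :
  rhoM_tree rho M T ->
  forall (t : R), dimL rho M T < t ->
  forall l : nat,
  exists (n : nat) (a : seq nat) (k : nat),
    [/\ (l <= n)%N, level T n a, (n + l <= k)%N &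
      forall (j : nat) (b' : seq nat), (j <= l)%N -> level (subtree T a) j b' ->
        powR rho (t * j%:R) <=
          (count_in M (subtree T a) (k - n) b')%:R /
          (ncard (level (subtree T a) (k - n)))%:R ].
Proof.
move=> rhoM t dimL_t l; have [/andP[rho_gt0 rho_lt1] _] := rhoM.
have TW := rhoM_tree_word_tree rhoM.
have t_gt0 : 0 < t := le_lt_trans (dimL_ge0 rho M T) dimL_t.
pose q := rho `^ t.
have q_gt0 : 0 < q by apply: powR_gt0.
have rho01 : 0 < rho <= 1 by rewrite rho_gt0 (ltW rho_lt1).
have q_le1 : q <= 1 by rewrite -(powRr0 rho); exact: (ger_powR rho01 (ltW t_gt0)).
apply: contrapT => no_witness.
suff : t <= dimL rho M T by rewrite leNgt dimL_t.
apply: (le_dimL TW rho_gt0 rho_lt1); apply/(dimL_setP TW rho_gt0); split=> //.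
exists (q ^+ (l + l)); first exact: exprn_gt0.
apply: (ndesc_ge TW q_gt0 q_le1) => a k Ta la alk.
apply: contrapT => no_thin; apply: no_witness; exists (size a), a, k; split=> //.
move=> j b jl b_lev; rewrite powRrM powR_mulrn ?powR_ge0 //.
apply: (count_in_ratio_ge TW Ta alk) => // b' b'_size Tab'.
by rewrite leNgt; apply/negP => thin; apply: no_thin; exists b'.
Qed.
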